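(* Let $\alpha,\alpha'$ be Morse–Thue decorated sentences over a finite alphabet $A$. Suppose that $\alpha$ and $\alpha'$ have a common final segment (identical as strings of decorated letters, including decorated stop signs) containing at least $l$ letters from $A$, where $l\ge0$ is an integer, and that $\big||\alpha|-|\alpha'|\big|\le l/2$. Then $|\alpha|=|\alpha'|$.
   Context: Morse–Thue sequence: start from $0$ and repeatedly apply the substitution $0\mapsto01$, $1\mapsto10$, obtaining $0,01,0110,01101001,\dots$; the limit infinite sequence is $(t(m))_{m\ge0}$ with values in $\{0,1\}$. A sentence over $A$ is a finite string in $A\cup\{s\}$ ending with the stop sign $s\notin A$ (words of $A$ each terminated by $s$). Levels of letters: the first letter has level 1 if it is not $s$ and 0 otherwise; each subsequent letter has level one more than the previous letter if it is not $s$, and the same level as the previous letter if it is $s$. The length $|\alpha|$ is the level of the last letter (i.e. the number of letters from $A$). The Morse–Thue decoration of $\alpha$ replaces every letter $x$ (including stop signs) of level $m$ by $(x,t(m))$. *)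

From mathcomp Require Import all_boot.
Set Implicit Arguments. Unset Strict Implicit. Unset Printing Implicit Defensive.

Definition mt_subst (w : seq bool) : seq bool :=
  flatten [seq [:: b; ~~ b] | b <- w].

Definition mt_word (n : nat) : seq bool := iter n mt_subst [:: false].

(* The limit sequence t(m): the m-th letter of mt_word m (which has length
   2^m > m, and every later iterate extends it as a prefix). *)
Definition mt (m : nat) : nat := nth false (mt_word m) m.

(* Letters of a sentence: Some a for a letter a of A, None for the stop
   sign s. *)
Definition is_letter (A : Type) (x : option A) : bool :=
  if x is Some _ then true else false.

Definition is_sentence (A : Type) (al : seq (option A)) : bool :=
  if al is [::] then false else ~~ is_letter (last None al).

(* Length |alpha| = level of the last letter = number of letters from A. *)
Definition slen (A : Type) (al : seq (option A)) : nat :=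
  count (@is_letter A) al.

Fixpoint deco_aux (A : Type) (m : nat) (al : seq (option A))
  : seq (option A * nat) :=
  match al with
  | [::] => [::]
  | x :: al' =>
      let m' := m + is_letter x in (x, mt m') :: deco_aux m' al'
  end.

Definition mt_decorate (A : Type) (al : seq (option A)) := deco_aux 0 al.

Definition dletters (A : Type) (w : seq (option A * nat)) : nat :=
  count (fun p => is_letter p.1) w.

(* Suppose the decorations of alpha and alpha' share a final segment: it is the decoration of
   one string s started at levels c < c', so t(c + i) = t(c' + i) for 0 < i <= |s|.  Here
   d := c' - c = |alpha'| - |alpha| and |s| >= l >= 2d, so t has a cube of period d starting at
   level c + 1.  The Morse-Thue word is cube-free: for d even the cube halves via t(2j) = t(j),
   and for d odd it would force five consecutive alternating letters, impossible since
   t(2j) <> t(2j + 1). *)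

From mathcomp Require Import all_boot zify.

Set Implicit Arguments.
Unset Strict Implicit.
Unset Printing Implicit Defensive.

Definition tm (m : nat) : bool := nth false (mt_word m) m.

Lemma mt_subst_cat u v : mt_subst (u ++ v) = mt_subst u ++ mt_subst v.
Proof. by rewrite /mt_subst map_cat flatten_cat. Qed.

Lemma mt_subst_negb w : mt_subst (map negb w) = map negb (mt_subst w).
Proof. by elim: w => //= b w IHw; rewrite /mt_subst /= in IHw *; rewrite negbK IHw. Qed.

Lemma mt_wordS n : mt_word n.+1 = mt_word n ++ map negb (mt_word n).
Proof.
elim: n => // n IHn.
by rewrite -[mt_word n.+2]/(mt_subst (mt_word n.+1)) {1}IHn mt_subst_cat mt_subst_negb.
Qed.

Lemma size_mt_word n : size (mt_word n) = 2 ^ n.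
Proof. by elim: n => // n IHn; rewrite mt_wordS size_cat size_map IHn expnS mul2n addnn. Qed.

Lemma nth_mt_subst w (b : bool) j : j < size w ->
  nth false (mt_subst w) (b + j.*2) = b (+) nth false w j.
Proof.
elim: w j => [|x w IHw] [|j] //= ltjw; first by clear IHw; case: b.
by rewrite doubleS !addnS; apply: IHw.
Qed.

Lemma nth_mt_word_le m n i : m <= n -> i < 2 ^ m ->
  nth false (mt_word n) i = nth false (mt_word m) i.
Proof.
move=> /subnKC <-; elim: (n - m) => [|k IHk] ltim; first by rewrite addn0.
by rewrite addnS mt_wordS nth_cat size_mt_word (leq_trans ltim) ?leq_pexp2l ?leq_addr ?IHk.
Qed.

Lemma tm_nth n i : i < 2 ^ n -> tm i = nth false (mt_word n) i.
Proof.
move=> ltin; have ltii : i < 2 ^ i by apply: ltn_expl.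
case: (leqP i n) => [le_in | /ltnW le_ni]; rewrite /tm.
  by rewrite (nth_mt_word_le le_in).
by rewrite (nth_mt_word_le le_ni).
Qed.

Lemma tm_half n : tm n = odd n (+) tm n./2.
Proof.
have ltj : n./2 < 2 ^ n./2 by apply: ltn_expl.
rewrite -{1}[n]odd_double_half (@tm_nth n./2.+1); last first.
  by rewrite expnS mul2n -addnn; case: (odd n); lia.
by rewrite [mt_word _]/= nth_mt_subst ?size_mt_word.
Qed.

Lemma tm_double j : tm j.*2 = tm j.
Proof. by rewrite tm_half odd_double doubleK. Qed.

Lemma tm_neq_succ_even z : ~~ odd z -> tm z != tm z.+1.
Proof.
move=> evz; rewrite [tm z.+1]tm_half /= evz -[z]odd_double_half (negbTE evz).
by rewrite add0n uphalf_double tm_double; case: (tm _).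
Qed.

Lemma tm_not_alternating y :
  ~ [/\ tm y != tm y.+1, tm y.+1 != tm y.+2, tm y.+2 != tm y.+3 & tm y.+3 != tm y.+4].
Proof.
have neq_neq_eq (a b c : bool) : a != b -> b != c -> a = c by case: a; case: b; case: c.
case=> /neq_neq_eq E01 /E01 E02 /neq_neq_eq E23 /E23 E24.
have tm_shift k : tm (y + k.*2) = odd y (+) tm (y./2 + k).
  by rewrite tm_half oddD odd_double addbF halfD odd_double andbF doubleK.
have [E0 E1] : tm y./2 = tm y./2.+1 /\ tm y./2.+1 = tm y./2.+2.
  move: (tm_shift 0) (tm_shift 1) (tm_shift 2).
  rewrite /= !addnS !addn0 -E24 -E02 => e0 e1 e2.
  by split; apply: (@addbI (odd y)); congruence.
case/boolP: (odd y./2) => [odd_h | /tm_neq_succ_even].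
  by move: (@tm_neq_succ_even y./2.+1); rewrite /= odd_h E1 eqxx => /(_ isT).
by rewrite E0 eqxx.
Qed.

Definition tm_cube (m d : nat) :=
  forall x, m <= x -> x < m + 2 * d -> tm x = tm (x + d).

Lemma tm_cube_odd m d : odd d -> ~ tm_cube m d.
Proof.
move=> odd_d cube.
(* One of y, y - d, y + d is even, and periodicity transports t(2j) <> t(2j + 1) to y. *)
have alt y : m <= y -> y.+1 < m + 3 * d -> tm y != tm y.+1.
  move=> le_my lt_ym; case/boolP: (odd y) => [odd_y | /tm_neq_succ_even //].
  case: (leqP (m + d) y) => [le_y | lt_y].
  - have E0 : tm (y - d) = tm y by rewrite cube ?subnK //; lia.
    have E1 : tm (y - d).+1 = tm y.+1 by rewrite cube ?addSn ?subnK //; lia.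
    rewrite -E0 -E1; apply: tm_neq_succ_even.
    by rewrite oddB ?odd_y ?odd_d //; lia.
  - have E0 : tm y = tm (y + d) by rewrite cube //; lia.
    have E1 : tm y.+1 = tm (y + d).+1 by rewrite cube //; lia.
    by rewrite E0 E1; apply: tm_neq_succ_even; rewrite oddD odd_y odd_d.
case: d odd_d cube alt => [|[|[|d]]] // _ cube alt.
  have E : tm m = tm m.+1 by rewrite -addn1 cube //; lia.
  suff : tm m != tm m.+1 by rewrite E eqxx.
  by apply: alt; lia.
by apply: (@tm_not_alternating m); split; apply: alt; lia.
Qed.

Lemma tm_cube_half m e : tm_cube m e.*2 -> tm_cube (uphalf m) e.
Proof.
move=> cube x le_x lt_x.
rewrite -tm_double -[tm (x + e)]tm_double doubleD; apply: cube;
  rewrite uphalf_half in le_x lt_x; lia.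
Qed.

Lemma tm_cube_free m d : 0 < d -> ~ tm_cube m d.
Proof.
elim/ltn_ind: d m => d IHd m d_gt0 cube.
case/boolP: (odd d) => [odd_d | even_d]; first exact: tm_cube_odd cube.
have d_eq : d = d./2.*2 by rewrite -[LHS]odd_double_half (negbTE even_d).
move: cube; rewrite d_eq => /tm_cube_half; apply: IHd; lia.
Qed.

Lemma nat_of_bool_inj : injective nat_of_bool.
Proof. by case; case. Qed.

Section Decoration.

Variable A : eqType.
Implicit Types (c : nat) (s al : seq (option A)) (w : seq (option A * nat)).

Lemma deco_aux_cat c s1 s2 :
  deco_aux c (s1 ++ s2) = deco_aux c s1 ++ deco_aux (c + slen s1) s2.
Proof. by elim: s1 c => [|x s1 IHs] c /=; rewrite ?addn0 // IHs /slen /= addnA. Qed.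

Lemma unzip1_deco_aux c s : unzip1 (deco_aux c s) = s.
Proof. by elim: s c => //= x s IHs c; rewrite IHs. Qed.

Lemma size_deco_aux c s : size (deco_aux c s) = size s.
Proof. by rewrite -[in RHS](unzip1_deco_aux c s) size_map. Qed.

Lemma dletters_deco_aux c s : dletters (deco_aux c s) = slen s.
Proof. by rewrite /dletters /slen -[in RHS](unzip1_deco_aux c s) count_map. Qed.

Lemma suffix_mt_decorate w al : suffix w (mt_decorate al) ->
  exists c s, w = deco_aux c s /\ c + slen s = slen al.
Proof.
case/suffixP => p E.
have le_p : size p <= size al.
  by rewrite -(size_deco_aux 0) -/(mt_decorate al) E size_cat leq_addr.
exists (slen (take (size p) al)), (drop (size p) al).
split; last by rewrite /slen -count_cat cat_take_drop.
move/eqP: E; rewrite /mt_decorate -{1}(cat_take_drop (size p) al) deco_aux_cat.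
by rewrite eqseq_cat ?size_deco_aux ?size_takel // => /andP[_ /eqP<-].
Qed.

Lemma deco_aux_eq_tm c c' s : deco_aux c s = deco_aux c' s ->
  forall i, 0 < i <= slen s -> tm (c + i) = tm (c' + i).
Proof.
elim: s c c' => [|x s IHs] c c' /=; first by move=> _ [|i].
case=> e_hd /IHs e_tl [|i] //; rewrite /slen /= -/(slen s).
case: x e_hd e_tl => [a|] /= e_hd e_tl le_i; last first.
  by rewrite !addn0 in e_tl; apply: e_tl; exact: le_i.
case: i le_i => [|i] le_i; first exact: nat_of_bool_inj e_hd.
by have := e_tl i.+1; rewrite -!addnA !add1n; apply; lia.
Qed.

Lemma decorated_suffix_slen_le al al' w l :
  suffix w (mt_decorate al) -> suffix w (mt_decorate al') -> l <= dletters w ->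
  2 * slen al' <= 2 * slen al + l -> slen al' <= slen al.
Proof.
move=> /suffix_mt_decorate[c [s [-> c_s]]] /suffix_mt_decorate[c' [s' [E c'_s']]].
have s'_eq : s' = s by rewrite -(unzip1_deco_aux c s) E unzip1_deco_aux.
subst s'; rewrite dletters_deco_aux => le_l le_al'.
rewrite leqNgt; apply/negP => lt_al.
apply: (@tm_cube_free c.+1 (c' - c)); first lia.
move=> x le_x lt_x.
have -> : x + (c' - c) = c' + (x - c) by lia.
by rewrite -{1}(subnKC (ltnW le_x)); apply: (deco_aux_eq_tm E); lia.
Qed.

End Decoration.

Theorem mainTheorem18 (A : finType) (al al' : seq (option A)) (l : nat) :
  is_sentence al -> is_sentence al' ->
  (exists w : seq (option A * nat),
      [/\ suffix w (mt_decorate al), suffix w (mt_decorate al') & l <= dletters w]) ->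
  2 * slen al <= 2 * slen al' + l ->
  2 * slen al' <= 2 * slen al + l ->
  slen al = slen al'.
Proof.
move=> _ _ [w [suf suf' le_l]] le_al le_al'; apply/eqP.
by rewrite eqn_leq (decorated_suffix_slen_le suf' suf le_l le_al)
  (decorated_suffix_slen_le suf suf' le_l le_al').
Qed.
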